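(* Let $L\ge 1$ and let $T_L = T^{(L)}\circ T^{(L-1)}\circ\cdots\circ T^{(1)}$ be an $L$-layer Transformer, each layer $T^{(\ell)}$ being a Transformer layer as described in the context and being Lipschitz continuous with respect to its input with constant $\lVert\nabla T^{(\ell)}\rVert$. Fix $k\ge 0$, prefix vectors $\mathbf{v}_1,\dots,\mathbf{v}_k\in\mathbb{R}^d$ and a vector $\mathbf{v}\in\mathbb{R}^d$ (all from a finite vocabulary of token vectors). For $n\ge1$ let $S_n=(\mathbf{v}_1,\dots,\mathbf{v}_k,\underbrace{\mathbf{v},\dots,\mathbf{v}}_{n\text{ times}})$ (length $n+k$) and $S^*=(\mathbf{v})$. Then $$\lim_{n\to\infty}\left\lVert T_L(S_n)_{n+k} - T_L(S^* )_1\right\rVert = 0.$$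
   Context: Model. Tokens are represented by vectors in $\mathbb{R}^d$ drawn from a finite vocabulary. A (decoder, causally masked) Transformer layer $T^{(\ell)}$ maps an input sequence $S=(\mathbf{v}_1,\dots,\mathbf{v}_m)$ to $T^{(\ell)}(S)=(\mathbf{v}'_1,\dots,\mathbf{v}'_m)$ with $$\mathbf{z}_i=\sum_{j\le i}\alpha_{i,j}\mathbf{v}_j+\mathbf{v}_i,\qquad \mathbf{v}'_i=\psi_\ell(\mathbf{z}_i)+\mathbf{z}_i,$$ where $\psi_\ell:\mathbb{R}^d\to\mathbb{R}^d$ is a Lipschitz continuous MLP and $\alpha_{i,j}=\exp(s_{i,j})/\sum_{j'\le i}\exp(s_{i,j'})$ for $j\le i$, with scores $s_{i,j}$ computed from queries and keys of tokens $i,j$ (possibly with a bounded positional encoding, such as RoPE, acting only on queries and keys). Standing assumption: at every layer there is a constant $\delta$, independent of the sequence and its length, with $|s_{i,j}-s_{i,j'}|\le\delta$ for all $i$ and $j,j'\le i$, so $\alpha_{i,j}\le e^{\delta}/i$. $T^{(\ell)}$ denotes the $\ell$-th layer, $T_\ell=T^{(\ell)}\circ\cdots\circ T^{(1)}$ the composition of the first $\ell$ layers, $T(S)_i$ the $i$-th element of the output sequence, and $\lVert\cdot\rVert$ the Euclidean norm. *)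

From HB Require Import structures.
From mathcomp Require Import all_boot all_order all_algebra.
From mathcomp Require Import all_classical all_reals all_analysis.
Set Implicit Arguments. Unset Strict Implicit. Unset Printing Implicit Defensive.
Import Order.TTheory GRing.Theory Num.Theory.
Local Open Scope ring_scope.

Definition enorm {R : realType} {d : nat} (v : 'rV[R]_d) : R :=
  Num.sqrt (\sum_(i < d) (v 0 i) ^+ 2).

Definition seq_enorm {R : realType} {d : nat} (S : seq 'rV[R]_d) : R :=
  Num.sqrt (\sum_(x <- S) (enorm x) ^+ 2).

(* Score function of an attention layer: [sc i j q k] is the score s_{i,j}
   for query position i and key position j (1-based) with query token q and
   key token k.  Positions are arguments so that bounded positional encodings
   (e.g. RoPE) acting on queries and keys are covered. *)
Definition score (R : realType) (d : nat) := nat -> nat -> 'rV[R]_d -> 'rV[R]_d -> R.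

Definition tlayer {R : realType} {d : nat} (psi : 'rV[R]_d -> 'rV[R]_d)
  (sc : score R d) (S : seq 'rV[R]_d) : seq 'rV[R]_d :=
  mkseq (fun i0 =>
    let i := i0.+1 in
    let vi := nth 0 S i0 in
    let den := \sum_(j < i) expR (sc i j.+1 vi (nth 0 S j)) in
    let z := \sum_(j < i) (expR (sc i j.+1 vi (nth 0 S j)) / den) *: nth 0 S j + vi in
    psi z + z) (size S).

(* T_L = T^(L) o ... o T^(1); layer l (1-based) uses psi (l-1), sc (l-1). *)
Fixpoint transformer {R : realType} {d : nat} (psi : nat -> 'rV[R]_d -> 'rV[R]_d)
  (sc : nat -> score R d) (L : nat) (S : seq 'rV[R]_d) : seq 'rV[R]_d :=
  match L with
  | 0 => S
  | L'.+1 => tlayer (psi L') (sc L') (transformer psi sc L' S)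
  end.

Definition lipschitz_map {R : realType} {d : nat} (f : 'rV[R]_d -> 'rV[R]_d) : Prop :=
  exists C : R, forall x y, enorm (f x - f y) <= C * enorm (x - y).

Definition bounded_scores {R : realType} {d : nat} (sc : score R d) : Prop :=
  exists delta : R, forall (S : nat -> 'rV[R]_d) (i j j' : nat),
    (1 <= j <= i)%N -> (1 <= j' <= i)%N ->
    `| sc i j (S i) (S j) - sc i j' (S i) (S j') | <= delta.

Definition layer_lipschitz {R : realType} {d : nat} (T : seq 'rV[R]_d -> seq 'rV[R]_d) : Prop :=
  exists C : R, forall S S' : seq 'rV[R]_d, size S = size S' ->
    seq_enorm [seq x.1 - x.2 | x <- zip (T S) (T S')]
      <= C * seq_enorm [seq x.1 - x.2 | x <- zip S S'].

(* By causality, position k+m of T_l(S_n) only depends on S_(m+1), so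
   a_l(m) := T_l(S_(m+1))_(k+m) is a single sequence, and it suffices to show
   a_l(m) -> w_l := T_l(S^* )_1 by induction on l.  Bounded score differences
   make every softmax weight at most e^delta/(k+m+1), so the last attention
   output of layer l+1 is within e^delta/(k+m+1) times the summed distance of
   all layer-l outputs to w_l.  The first k of these distances are fixed and
   the others are |a_l(j) - w_l|, whose Cesaro means vanish.  Hence the
   residual stream tends to 2 w_l, which is also the residual stream of the
   one-token input, and continuity of the MLP closes the induction. *)

From HB Require Import structures.
From mathcomp Require Import all_boot all_order all_algebra.
From mathcomp Require Import all_classical all_reals all_analysis.
Import Order.TTheory GRing.Theory Num.Theory.
Import numFieldNormedType.Exports.
Local Open Scope ring_scope.
Local Open Scope classical_set_scope.

Set Implicit Arguments.
Unset Strict Implicit.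

Section WeightedMean.
Variables (K : numFieldType) (V : normedModType K).

Lemma weighted_mean_dist_le (N : nat) (e : 'I_N -> K) (y : 'I_N -> V) (c : V) (E : K) :
  (0 < N)%N -> (forall j, 0 < e j) -> (forall j j', e j <= E * e j') ->
  `|\sum_j (e j / \sum_j' e j') *: y j - c| <= E / N%:R * \sum_j `|y j - c|.
Proof.
move=> N_gt0 e_gt0 e_le.
set s := \sum_j' e j'.
have s_gt0 : 0 < s.
  by rewrite /s (bigD1 (Ordinal N_gt0)) //= ltr_pwDl // sumr_ge0 // => j _; exact: ltW.
have -> : \sum_j (e j / s) *: y j - c = \sum_j (e j / s) *: (y j - c).
  rewrite -[c in LHS]scale1r -[1 in LHS](divff (lt0r_neq0 s_gt0)) mulr_suml scaler_suml.
  by rewrite -sumrB; apply: eq_bigr => j _; rewrite scalerBr.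
rewrite (le_trans (ler_norm_sum _ _ _)) // mulr_sumr; apply: ler_sum => j _.
rewrite normrZ ger0_norm; last by rewrite divr_ge0 // ltW.
apply: ler_wpM2r => //.
rewrite ler_pdivrMr // mulrAC ler_pdivlMr ?ltr0n //.
have -> : e j * N%:R = \sum_(j' < N) e j by rewrite sumr_const card_ord mulr_natr.
rewrite /s mulr_sumr; apply: ler_sum => j' _.
exact: e_le.
Qed.

End WeightedMean.

Section LipschitzCvg.
Variables (K : realFieldType) (V W : normedModType K).

Lemma cvg_lipschitz (f : V -> W) (C : K) (a : nat -> V) (x : V) :
  (forall y z, `|f y - f z| <= C * `|y - z|) ->
  a @ \oo --> x -> (fun n => f (a n)) @ \oo --> f x.
Proof.
move=> f_lip /(subr_cvg0 a)/(norm_cvg0P (fun n => a n - x)) ax0.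
apply/(subr_cvg0 (fun n => f (a n))); apply/(norm_cvg0P (fun n => f (a n) - f x)).
apply: (@squeeze_cvgr _ _ _ _ (fun=> 0) (fun n => C * `|a n - x|)).
- by apply: nearW => n; rewrite normr_ge0 f_lip.
- exact: cvg_cst.
- by rewrite -(mulr0 C); exact: cvgM (cvg_cst C) ax0.
Qed.

End LipschitzCvg.

Section ShiftedMean.
Variable K : archiRealFieldType.

Lemma shifted_mean_cvg0 (k : nat) (c : K) (b : K ^nat) :
  0 <= c -> (forall j, 0 <= b j) -> b @ \oo --> 0 ->
  (fun m => (c + \sum_(j < m.+1) b j) / (k + m).+1%:R) @ \oo --> 0.
Proof.
move=> c_ge0 b_ge0 b0.
apply: (@squeeze_cvgr _ _ _ _ (fun=> 0) (fun m => c * harmonic m + arithmetic_mean b m)).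
- apply: nearW => m; have S_ge0 : 0 <= \sum_(j < m.+1) b j by exact: sumr_ge0.
  have inv_le : ((k + m).+1%:R)^-1 <= (m.+1%:R : K)^-1.
    by rewrite lef_pV2 ?posrE ?ltr0n // ler_nat ltnS leq_addl.
  rewrite divr_ge0 ?addr_ge0 //= /arithmetic_mean /harmonic /series /= big_mkord.
  by rewrite mulrDl [X in _ + X]mulrC; apply: lerD; [exact: ler_wpM2l | exact: ler_wpM2r].
- exact: cvg_cst.
- have -> : (0 : K) = c * 0 + 0 by rewrite mulr0 addr0.
  by apply: cvgD; [exact: cvgM (cvg_cst c) (@cvg_harmonic _) | exact: cesaro].
Qed.

End ShiftedMean.

Section EuclideanNorm.
Variables (R : realType) (d : nat).
Implicit Types x : 'rV[R]_d.

Lemma coord_le_normr x i : `|x 0 i| <= `|x|.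
Proof.
rewrite [leRHS]/Num.Def.normr /= mx_normrE; apply/bigmax_geP; right.
by exists (0, i).
Qed.

Lemma coord_le_enorm x i : `|x 0 i| <= enorm x.
Proof.
rewrite /enorm -sqrtr_sqr ler_sqrt ?sumr_ge0 // => [|j _]; last exact: sqr_ge0.
by rewrite (bigD1 i) //= lerDl sumr_ge0 // => j _; exact: sqr_ge0.
Qed.

Lemma normr_le_enorm x : `|x| <= enorm x.
Proof.
rewrite [leLHS]/Num.Def.normr /= mx_normrE; apply/bigmax_leP.
split => [|[i j] _ /=]; first by rewrite sqrtr_ge0.
by rewrite ord1; exact: coord_le_enorm.
Qed.

Lemma enorm_le_normr x : enorm x <= Num.sqrt d%:R * `|x|.
Proof.
rewrite -[`|x|]ger0_norm // -sqrtr_sqr -sqrtrM // ler_sqrt ?mulr_ge0 //.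
rewrite -[d in d%:R](card_ord d) -sumr_const mulr_suml; apply: ler_sum => i _.
by rewrite mul1r -real_normK ?num_real // lerXn2r ?nnegrE ?coord_le_normr.
Qed.

Lemma lipschitz_map_cvg (f : 'rV[R]_d -> 'rV[R]_d) (a : nat -> 'rV[R]_d) x :
  lipschitz_map f -> a @ \oo --> x -> (fun n => f (a n)) @ \oo --> f x.
Proof.
move=> [C f_lip]; apply: (@cvg_lipschitz _ _ _ _ (`|C| * Num.sqrt d%:R)) => y z.
rewrite (le_trans (normr_le_enorm _)) // (le_trans (f_lip y z)) // -mulrA.
rewrite (@le_trans _ _ (`|C| * enorm (y - z))) ?ler_wpM2l ?enorm_le_normr //.
by rewrite ler_wpM2r ?real_ler_norm ?num_real // /enorm sqrtr_ge0.
Qed.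

Lemma enorm_subr_cvg0 (a : nat -> 'rV[R]_d) x :
  a @ \oo --> x -> (fun n => enorm (a n - x)) @ \oo --> 0.
Proof.
move=> /(subr_cvg0 a)/(norm_cvg0P (fun n => a n - x)) ax0.
apply: (@squeeze_cvgr _ _ _ _ (fun=> 0) (fun n => Num.sqrt d%:R * `|a n - x|)).
- by apply: nearW => n; rewrite enorm_le_normr /enorm sqrtr_ge0.
- exact: cvg_cst.
- by rewrite -(mulr0 (Num.sqrt d%:R)); exact: cvgM (cvg_cst _) ax0.
Qed.

End EuclideanNorm.

Section Layer.
Variables (R : realType) (d : nat).
Implicit Types (S : seq 'rV[R]_d) (p q : nat).

Section OneLayer.
Variables (phi : 'rV[R]_d -> 'rV[R]_d) (s : score R d).

Definition attn S p : 'rV[R]_d :=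
  \sum_(j < p.+1) (expR (s p.+1 j.+1 (nth 0 S p) (nth 0 S j)) /
     \sum_(j' < p.+1) expR (s p.+1 j'.+1 (nth 0 S p) (nth 0 S j'))) *: nth 0 S j.

Lemma size_tlayer S : size (tlayer phi s S) = size S.
Proof. exact: size_mkseq. Qed.

Lemma nth_tlayer S p : (p < size S)%N ->
  nth 0 (tlayer phi s S) p = phi (attn S p + nth 0 S p) + (attn S p + nth 0 S p).
Proof. by move=> p_lt; rewrite nth_mkseq. Qed.

Lemma attn_take S q p : (p < q)%N -> attn (take q S) p = attn S p.
Proof.
move=> p_lt; have nth_take_lt j : (j < p.+1)%N -> nth 0 (take q S) j = nth 0 S j.
  by move=> j_lt; rewrite nth_take // (leq_trans j_lt).
rewrite /attn; apply: eq_bigr => j _; rewrite !nth_take_lt //.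
by congr (_ / _ *: _); apply: eq_bigr => j' _; rewrite nth_take_lt.
Qed.

Lemma tlayer_take S q : take q (tlayer phi s S) = tlayer phi s (take q S).
Proof.
apply: (@eq_from_nth _ 0); first by rewrite size_tlayer !size_take size_tlayer.
move=> p; rewrite size_take size_tlayer => p_lt.
have p_ltq : (p < q)%N by apply: leq_trans p_lt (geq_minl _ _).
have p_ltS : (p < size S)%N by apply: leq_trans p_lt (geq_minr _ _).
rewrite nth_take // !nth_tlayer ?size_take ?gtn_min ?p_ltq //.
by rewrite attn_take // nth_take.
Qed.

Lemma attn0 S : attn S 0 = nth 0 S 0.
Proof. by rewrite /attn !big_ord1 divff ?scale1r // gt_eqF // expR_gt0. Qed.

Lemma bounded_scores_attn_dist : bounded_scores s ->
  exists2 E : R, 0 <= E & forall S p c,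
    `|attn S p - c| <= E / p.+1%:R * \sum_(j < p.+1) `|nth 0 S j - c|.
Proof.
move=> [delta s_bnd]; exists (expR delta) => [|S p c]; first exact: expR_ge0.
apply: weighted_mean_dist_le => // [j|j j']; first exact: expR_gt0.
rewrite -expRD ler_expR -lerBlDr.
have := s_bnd (fun i => nth 0 S i.-1) p.+1 j.+1 j'.+1; rewrite /= !ltn_ord.
by move=> /(_ isT isT); apply: le_trans; exact: ler_norm.
Qed.

End OneLayer.

Section Stack.
Variables (psi : nat -> 'rV[R]_d -> 'rV[R]_d) (sc : nat -> score R d).

Lemma size_transformer l S : size (transformer psi sc l S) = size S.
Proof. by elim: l => //= l IH; rewrite size_tlayer. Qed.

Lemma transformer_take l S q :
  take q (transformer psi sc l S) = transformer psi sc l (take q S).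
Proof. by elim: l => [|l IH] //=; rewrite tlayer_take IH. Qed.

Lemma transformer_singleton_succ l (v : 'rV[R]_d) :
  let w := nth 0 (transformer psi sc l [:: v]) 0 in
  nth 0 (transformer psi sc l.+1 [:: v]) 0 = psi l (w + w) + (w + w).
Proof. by rewrite /= nth_tlayer ?size_transformer // attn0. Qed.

End Stack.
End Layer.

Section RepeatedToken.
Variables (R : realType) (d : nat) (psi : nat -> 'rV[R]_d -> 'rV[R]_d).
Variables (sc : nat -> score R d) (prefix : seq 'rV[R]_d) (v : 'rV[R]_d).

Local Notation input n := (prefix ++ nseq n v).
Local Notation out l S := (transformer psi sc l S).

Definition repeat_out l m := nth 0 (out l (input m.+1)) (size prefix + m).

Definition single_out l := nth 0 (out l [:: v]) 0.

Lemma nth_transformer_prefix l n p : (p < size prefix)%N ->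
  nth 0 (out l (input n)) p = nth 0 (out l prefix) p.
Proof.
by move=> p_lt; rewrite -(nth_take 0 p_lt) transformer_take take_size_cat.
Qed.

Lemma nth_transformer_repeat l n j : (j < n)%N ->
  nth 0 (out l (input n)) (size prefix + j) = repeat_out l j.
Proof.
move=> j_lt; rewrite /repeat_out -(nth_take 0 (ltnSn (size prefix + j))).
by rewrite transformer_take -addnS takeD take_size_cat ?drop_size_cat ?take_nseq.
Qed.

Definition repeat_attn l m := attn (sc l) (out l (input m.+1)) (size prefix + m).

Lemma repeat_out_succ l m :
  let z := repeat_attn l m + repeat_out l m in repeat_out l.+1 m = psi l z + z.
Proof.
by rewrite /= /repeat_out /= nth_tlayer // size_transformer size_cat /= size_nseq addnS.
Qed.

Lemma repeat_dist_split l m (w : 'rV[R]_d) :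
  \sum_(j < (size prefix + m).+1) `|nth 0 (out l (input m.+1)) j - w| =
  \sum_(j < size prefix) `|nth 0 (out l prefix) j - w| +
  \sum_(j < m.+1) `|repeat_out l j - w|.
Proof.
rewrite -addnS big_split_ord; congr (_ + _); apply: eq_bigr => j _.
  by rewrite (nth_transformer_prefix _ _ (ltn_ord j)).
by rewrite (nth_transformer_repeat _ (ltn_ord j)).
Qed.

Lemma repeat_attn_cvg l : bounded_scores (sc l) ->
  repeat_out l @ \oo --> single_out l -> repeat_attn l @ \oo --> single_out l.
Proof.
move=> /bounded_scores_attn_dist[E E_ge0 attn_dist] /(subr_cvg0 (repeat_out l)).
move=> /(norm_cvg0P (fun m => repeat_out l m - single_out l)) out_cvg.
apply/(subr_cvg0 (repeat_attn l)).
apply/(norm_cvg0P (fun m => repeat_attn l m - single_out l)).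
set c := \sum_(j < size prefix) `|nth 0 (out l prefix) j - single_out l|.
have c_ge0 : 0 <= c by apply: sumr_ge0 => j _.
have mean_cvg := shifted_mean_cvg0 (size prefix) c_ge0 (fun j => normr_ge0 _) out_cvg.
apply: (@squeeze_cvgr _ _ _ _ (fun=> 0) (fun m => E *
  ((c + \sum_(j < m.+1) `|repeat_out l j - single_out l|) / (size prefix + m).+1%:R))).
- apply: nearW => m; rewrite normr_ge0 /= (le_trans (attn_dist _ _ _)) //.
  by rewrite repeat_dist_split -/c [leLHS]mulrAC -mulrA.
- exact: cvg_cst.
- by rewrite -[X in _ --> X](mulr0 E); exact: cvgM (cvg_cst E) mean_cvg.
Qed.

Lemma repeat_out_cvg_succ l : lipschitz_map (psi l) -> bounded_scores (sc l) ->
  repeat_out l @ \oo --> single_out l -> repeat_out l.+1 @ \oo --> single_out l.+1.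
Proof.
move=> psi_lip sc_bnd out_cvg.
have z_cvg : (fun m => repeat_attn l m + repeat_out l m) @ \oo -->
    single_out l + single_out l.
  exact: cvgD (repeat_attn_cvg sc_bnd out_cvg) out_cvg.
rewrite /single_out transformer_singleton_succ -/(single_out l).
under eq_cvg do rewrite repeat_out_succ.
exact: cvgD (lipschitz_map_cvg psi_lip z_cvg) z_cvg.
Qed.

Lemma repeat_out0 m : repeat_out 0 m = v.
Proof. by rewrite /repeat_out nth_cat ltnNge leq_addr addKn nth_nseq ltnSn. Qed.

Lemma repeat_out_cvg L :
  (forall l, (l < L)%N -> lipschitz_map (psi l)) ->
  (forall l, (l < L)%N -> bounded_scores (sc l)) ->
  forall l, (l <= L)%N -> repeat_out l @ \oo --> single_out l.
Proof.
move=> psi_lip sc_bnd; elim=> [_ | l IH lt_lL].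
  by under eq_cvg do rewrite repeat_out0; exact: cvg_cst.
by apply: repeat_out_cvg_succ; [exact: psi_lip | exact: sc_bnd | exact/IH/ltnW].
Qed.

End RepeatedToken.

Theorem theorem2 (R : realType) (d L : nat)
  (psi : nat -> 'rV[R]_d -> 'rV[R]_d) (sc : nat -> score R d)
  (prefix : seq 'rV[R]_d) (v : 'rV[R]_d) :
  (1 <= L)%N ->
  (forall l, (l < L)%N -> lipschitz_map (psi l)) ->
  (forall l, (l < L)%N -> bounded_scores (sc l)) ->
  (forall l, (l < L)%N -> layer_lipschitz (tlayer (psi l) (sc l))) ->
  (fun n : nat =>
     enorm (nth 0 (transformer psi sc L (prefix ++ nseq n v)) (n + size prefix).-1
            - nth 0 (transformer psi sc L [:: v]) 0))
    @ \oo --> (0 : R).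
Proof.
move=> _ psi_lip sc_bnd _.
rewrite -cvg_shiftS; under eq_cvg do rewrite /= addnC.
exact: enorm_subr_cvg0 (repeat_out_cvg prefix psi_lip sc_bnd (leqnn L)).
Qed.
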